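(* Let $\upsilon$ be a positive integer, $n$ a nonnegative integer, and $p,q$ real parameters with $q>-1$. Then $y=M_n(p,q,\upsilon;x)$ satisfies $$\Big[xD\,(xD+q+1-\upsilon)_{\upsilon}-(-x)^{\upsilon}(xD-\upsilon n)(xD+n+1-p)_{\upsilon}\Big]y=0,$$ where $D=\frac{d}{dx}$ and, for an operator $T$ and constant $c$, $(T+c)_{\upsilon}=\prod_{k=0}^{\upsilon-1}(T+c+k)$.
   Context: $(a)_k=a(a+1)\cdots(a+k-1)$, $(a)_0=1$, denotes the Pochhammer symbol. For a positive integer $\upsilon$, a nonnegative integer $n$ and real parameters $p,q$ define $$M_n(p,q,\upsilon;x)=(-1)^n(q+1)_{\upsilon n}\sum_{j=0}^{n}(-1)^j\binom{n}{j}\frac{(n+1-p)_{\upsilon j}}{(q+1)_{\upsilon j}}(-x)^{\upsilon j}.$$ *)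

From HB Require Import structures.
From mathcomp Require Import all_boot all_order all_algebra.
From mathcomp Require Import reals.
Set Implicit Arguments. Unset Strict Implicit. Unset Printing Implicit Defensive.
Import Order.TTheory GRing.Theory Num.Theory.
Local Open Scope ring_scope.

Definition poch {R : ringType} (a : R) (k : nat) : R :=
  \prod_(i < k) (a + i%:R).

Definition Mpoly {R : realType} (n : nat) (p q : R) (u : nat) : {poly R} :=
  ((-1) ^+ n * poch (q + 1) (u * n)) *:
  \sum_(j < n.+1)
     (((-1) ^+ j * 'C(n, j)%:R * poch (n%:R + 1 - p) (u * j)
        / poch (q + 1) (u * j)) *: (- 'X) ^+ (u * j)).

Definition theta {R : ringType} (P : {poly R}) : {poly R} := 'X * P^`().

(* (theta + c)_k P = prod_{i=0}^{k-1} (theta + c + i) applied to P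
   (the factors commute). *)
Fixpoint thetaPoch {R : ringType} (c : R) (k : nat) (P : {poly R}) : {poly R} :=
  match k with
  | 0 => P
  | k'.+1 => let Q := thetaPoch c k' P in theta Q + (c + k'%:R) *: Q
  end.

Definition Lop {R : realType} (n : nat) (p q : R) (u : nat) (y : {poly R})
  : {poly R} :=
  let Z := thetaPoch (n%:R + 1 - p) u y in
  theta (thetaPoch (q + 1 - u%:R) u y)
  - (- 'X) ^+ u * (theta Z - (u * n)%:R *: Z).

From HB Require Import structures.
From mathcomp Require Import all_boot all_order all_algebra.
From mathcomp Require Import reals ring lra.
Import Order.TTheory GRing.Theory Num.Theory.
Set Implicit Arguments. Unset Strict Implicit.
Local Open Scope ring_scope.

(* The operator is linear, and on monomials theta acts diagonally,
   theta x^m = m x^m, so (theta + c)_k x^m = (c + m)_k x^m.  Hence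
   L x^m = a(m) x^m - b(m) x^(m+u) with a(m) = m (q+1-u+m)_u and
   b(m) = (-1)^u (m - u n) (n+1-p+m)_u.  Writing M_n = sum_j c_j x^(u j),
   L M_n telescopes: a(0) = 0, b(u n) = 0, and the ratio of consecutive
   Pochhammer symbols and binomials in c_j gives
   a(u (j+1)) c_(j+1) = b(u j) c_j; here q > -1 keeps (q+1)_k nonzero. *)

Section EulerOperator.
Variable R : comNzRingType.

Lemma theta_is_linear : linear (@theta R).
Proof. by move=> a P Q; rewrite /theta derivD derivZ mulrDr scalerAr. Qed.

HB.instance Definition _ :=
  GRing.isLinear.Build R {poly R} {poly R} _ (@theta R) theta_is_linear.

Lemma thetaXn m : theta ('X^m : {poly R}) = m%:R *: 'X^m.
Proof.
rewrite /theta derivXn; case: m => [|m]; first by rewrite mulr0n mulr0 scale0r.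
by rewrite /= mulrnAr -exprS scaler_nat.
Qed.

Lemma thetaPoch_is_linear (c : R) k : linear (thetaPoch c k).
Proof.
move=> a P Q; elim: k => [|k IH] //=.
by rewrite IH linearP !scalerDr scalerA mulrC -scalerA addrACA.
Qed.

HB.instance Definition _ (c : R) k :=
  GRing.isLinear.Build R {poly R} {poly R} _ (thetaPoch c k)
    (thetaPoch_is_linear c k).

Lemma pochS (a : R) k : poch a k.+1 = poch a k * (a + k%:R).
Proof. by rewrite /poch big_ord_recr. Qed.

Lemma poch_add (a : R) m k : poch a (m + k) = poch a m * poch (a + m%:R) k.
Proof.
rewrite /poch big_split_ord /=; congr (_ * _); apply: eq_bigr => i _.
by rewrite natrD addrA.
Qed.

Lemma thetaPochXn (c : R) k m :
  thetaPoch c k ('X^m : {poly R}) = poch (c + m%:R) k *: 'X^m.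
Proof.
elim: k => [|k IH] /=; first by rewrite /poch big_ord0 scale1r.
rewrite IH linearZ /= thetaXn !scalerA -scalerDl pochS.
by congr (_ *: _); ring.
Qed.

End EulerOperator.

Lemma poch_gt0 (R : numDomainType) (a : R) k : 0 < a -> 0 < poch a k.
Proof. by move=> a_gt0; apply: prodr_gt0 => i _; apply: ltr_wpDr. Qed.

Lemma telescope_sum_eq0 (V : zmodType) (F G : nat -> V) n :
  F 0%N = 0 -> G n = 0 -> (forall j, (j < n)%N -> F j.+1 = G j) ->
  \sum_(j < n.+1) (F j - G j) = 0.
Proof.
move=> F0 Gn FG.
suff sum_eq m : (m <= n)%N -> \sum_(j < m.+1) (F j - G j) = - G m.
  by rewrite sum_eq // Gn oppr0.
elim: m => [|m IH] m_le; first by rewrite big_ord1 F0 sub0r.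
by rewrite big_ord_recr /= IH ?(ltnW m_le) // FG // addrA addNr add0r.
Qed.

Section Operator.
Variables (R : realType) (n : nat) (p q : R) (u : nat).

Lemma Lop_is_linear : linear (Lop n p q u).
Proof. by move=> a P Q; rewrite /Lop !linearP /= -!mul_polyC; ring. Qed.

HB.instance Definition _ :=
  GRing.isLinear.Build R {poly R} {poly R} _ (Lop n p q u) Lop_is_linear.

Definition Lop_diag (m : nat) : R := m%:R * poch (q + 1 - u%:R + m%:R) u.

Definition Lop_shift (m : nat) : R :=
  (-1) ^+ u * (m%:R - (u * n)%:R) * poch (n%:R + 1 - p + m%:R) u.

Lemma LopXn m :
  Lop n p q u 'X^m = Lop_diag m *: 'X^m - Lop_shift m *: 'X^(m + u).
Proof.
rewrite /Lop /Lop_diag /Lop_shift !thetaPochXn !linearZ /= !thetaXn exprD.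
rewrite -[- 'X]mulN1r exprMn -!mul_polyC.
rewrite !(rmorphM, rmorphB, rmorphXn, rmorphN, rmorph1) /=; ring.
Qed.

Definition Mcoef (j : nat) : R :=
  (-1) ^+ n * poch (q + 1) (u * n) *
  ((-1) ^+ j * 'C(n, j)%:R * poch (n%:R + 1 - p) (u * j)
     / poch (q + 1) (u * j)) * (-1) ^+ (u * j).

Lemma Mpoly_monomials :
  Mpoly n p q u = \sum_(j < n.+1) Mcoef j *: 'X^(u * j).
Proof.
rewrite /Mpoly scaler_sumr; apply: eq_bigr => j _.
by rewrite -[- 'X]scaleN1r exprZn !scalerA.
Qed.

Lemma Mcoef_rec j : (j < n)%N -> poch (q + 1) (u * j.+1) != 0 ->
  Mcoef j.+1 * Lop_diag (u * j.+1) = Mcoef j * Lop_shift (u * j).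
Proof.
move=> lt_jn; rewrite mulnSr poch_add mulf_eq0 negb_or => /andP[Pj Pu].
have j1_neq0 : (j%:R + 1 : R) != 0 by rewrite natr1 pnatr_eq0.
have binS : 'C(n, j.+1)%:R = (n%:R - j%:R) * 'C(n, j)%:R / (j%:R + 1) :> R.
  apply: (mulIf j1_neq0); rewrite mulfVK // mulrC natr1 -natrM mul_bin_left.
  by rewrite natrM natrB // ltnW.
have base : q + 1 - u%:R + (u * j + u)%:R = q + 1 + (u * j)%:R.
  by rewrite natrD; ring.
rewrite /Lop_diag /Lop_shift base /Mcoef binS mulnSr.
rewrite !poch_add !exprD !exprS !natrD !natrM.
by field; rewrite -natrM Pj Pu j1_neq0.
Qed.

End Operator.

Theorem mainTheorem6 (R : realType) (u n : nat) (p q : R) :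
  (0 < u)%N -> -1 < q -> Lop n p q u (Mpoly n p q u) = 0.
Proof.
move=> _ q_gt; have q1_gt0 : 0 < q + 1 by lra.
rewrite Mpoly_monomials linear_sum.
under eq_bigr do rewrite linearZ /= LopXn scalerBr !scalerA -mulnSr.
pose F j := (Mcoef n p q u j * Lop_diag q u (u * j)) *: 'X^(u * j).
pose G j := (Mcoef n p q u j * Lop_shift n p u (u * j)) *: 'X^(u * j.+1).
apply: (@telescope_sum_eq0 _ F G) => [||j lt_jn].
- by rewrite /F /Lop_diag muln0 mul0r mulr0 scale0r.
- by rewrite /G /Lop_shift subrr mulr0 mul0r mulr0 scale0r.
- by rewrite /F /G Mcoef_rec // gt_eqF // poch_gt0.
Qed.
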